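(* For every even integer $m\ge 4$ there exist a positive integer $n$ and a tensor in $T_{m,n}$ that is a $B$ tensor but not a $P$ tensor, and a tensor in $T_{m,n}$ that is a $B_0$ tensor but not a $P_0$ tensor.
   Context: $T_{m,n}$ denotes the set of real $m$th order $n$-dimensional tensors $\mathbb{A}=(a_{i_1i_2\ldots i_m})$ with $i_j\in[n]=\{1,\ldots,n\}$. For $x\in\mathbb{R}^n$, $(\mathbb{A}x^{m-1})_i=\sum_{i_2,\ldots,i_m=1}^n a_{ii_2\ldots i_m}x_{i_2}\cdots x_{i_m}$. $\mathbb{A}$ is a $P$ tensor if for every nonzero $x\in\mathbb{R}^n$, $\max_{i\in[n]}x_i(\mathbb{A}x^{m-1})_i>0$; it is a $P_0$ tensor if for every nonzero $x\in\mathbb{R}^n$ there is $i\in[n]$ with $x_i\ne0$ and $x_i(\mathbb{A}x^{m-1})_i\ge0$. $\mathbb{A}$ is a $B$ tensor if for all $i\in[n]$, $\sum_{i_2,\ldots,i_m=1}^n a_{ii_2\ldots i_m}>0$ and $\frac{1}{n^{m-1}}\sum_{i_2,\ldots,i_m=1}^n a_{ii_2\ldots i_m}>a_{ij_2\ldots j_m}$ for all $(j_2,\ldots,j_m)\neq(i,\ldots,i)$. $\mathbb{A}$ is a $B_0$ tensor if for all $i\in[n]$, $\sum_{i_2,\ldots,i_m=1}^n a_{ii_2\ldots i_m}\ge0$ and $\frac{1}{n^{m-1}}\sum_{i_2,\ldots,i_m=1}^n a_{ii_2\ldots i_m}\ge a_{ij_2\ldots j_m}$ for all $(j_2,\ldots,j_m)\neq(i,\ldots,i)$.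 *)

From HB Require Import structures.
From mathcomp Require Import all_boot all_order all_algebra.
From mathcomp Require Import reals.
Set Implicit Arguments. Unset Strict Implicit. Unset Printing Implicit Defensive.
Import Order.TTheory GRing.Theory Num.Theory.
Local Open Scope ring_scope.

(* A real m-th order n-dimensional tensor A = (a_{i i_2 ... i_m}):
   the entry a_{i i_2 ... i_m} is  A i t  with  t = (i_2,...,i_m),
   an (m-1)-tuple of indices in [n] = 'I_n (0-based). *)
Definition tensor (R : realType) (m n : nat) := 'I_n -> (m.-1).-tuple 'I_n -> R.

Definition tapply (R : realType) (m n : nat) (A : tensor R m n) (x : 'I_n -> R)
  (i : 'I_n) : R :=
  \sum_(t : (m.-1).-tuple 'I_n) A i t * \prod_(k < m.-1) x (tnth t k).

Definition nonzero_vec (R : realType) (n : nat) (x : 'I_n -> R) : Prop :=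
  exists i, x i != 0.

Definition is_P_tensor (R : realType) (m n : nat) (A : tensor R m n) : Prop :=
  forall x : 'I_n -> R, nonzero_vec x ->
    exists i : 'I_n, 0 < x i * tapply A x i.

Definition is_P0_tensor (R : realType) (m n : nat) (A : tensor R m n) : Prop :=
  forall x : 'I_n -> R, nonzero_vec x ->
    exists i : 'I_n, x i != 0 /\ 0 <= x i * tapply A x i.

Definition row_sum (R : realType) (m n : nat) (A : tensor R m n) (i : 'I_n) : R :=
  \sum_(t : (m.-1).-tuple 'I_n) A i t.

Definition diag_idx (m n : nat) (i : 'I_n) : (m.-1).-tuple 'I_n :=
  [tuple of nseq m.-1 i].

Definition is_B_tensor (R : realType) (m n : nat) (A : tensor R m n) : Prop :=
  forall i : 'I_n,
    0 < row_sum A i /\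
    forall t : (m.-1).-tuple 'I_n, t != diag_idx m i ->
      row_sum A i / (n ^ m.-1)%:R > A i t.

Definition is_B0_tensor (R : realType) (m n : nat) (A : tensor R m n) : Prop :=
  forall i : 'I_n,
    0 <= row_sum A i /\
    forall t : (m.-1).-tuple 'I_n, t != diag_idx m i ->
      row_sum A i / (n ^ m.-1)%:R >= A i t.

From mathcomp Require Import all_boot all_order all_algebra.
From mathcomp Require Import reals.
From mathcomp Require Import ring lra.
Set Implicit Arguments. Unset Strict Implicit. Unset Printing Implicit Defensive.
Import Order.TTheory GRing.Theory Num.Theory.
Local Open Scope ring_scope.

(* The counterexamples are "constant + diagonal bump - one spike" tensors:
   A i t = c_i + w_i [t = (i,...,i)] - b_i [t = s_i].  With c_i > 0 and
   0 <= b_i < w_i every off-diagonal entry is below the row mean, so A is a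
   B tensor.  In (A x^{m-1})_i the constant part contributes
   c_i (sum_j x_j)^{m-1}, which for even m has the sign of sum_j x_j.
   Take n = 4, x = (2,-1,-1,-1) (sum -1) and spikes s_i = (i,0,...,0):
   in row 0 the huge constant c_0 = 2^m beats the diagonal term 2^{m-1}, and
   in the other rows the spike term b_i 2^{m-2} >= 4 beats c_i + w_i = 3.
   So x_i (A x^{m-1})_i < 0 for every i and A is not even a P0 tensor. *)

Lemma sum_prod_tnth (R : comPzSemiRingType) (n p : nat) (x : 'I_n -> R) :
  \sum_(t : p.-tuple 'I_n) \prod_(k < p) x (tnth t k) = (\sum_j x j) ^+ p.
Proof.
rewrite -[in RHS](card_ord p) -prodr_const bigA_distr_bigA /=.
rewrite (reindex (fun t : p.-tuple 'I_n => [ffun k => tnth t k])) /=.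
  by apply: eq_bigr => t _; apply: eq_bigr => k _; rewrite ffunE.
exists (fun f : {ffun 'I_p -> 'I_n} => [tuple f k | k < p]) => [t _|f _].
  by apply: eq_from_tnth => k; rewrite tnth_mktuple ffunE.
by apply/ffunP => k; rewrite ffunE tnth_mktuple.
Qed.

Lemma sumr_mul_indicator (R : pzSemiRingType) (T : finType) (d : T) (F : T -> R) :
  \sum_(t : T) F t * (t == d)%:R = F d.
Proof.
rewrite (bigD1 d) //= eqxx mulr1 big1 ?addr0 // => t /negbTE ->.
by rewrite mulr0.
Qed.

Lemma prod_diag_idx (R : pzSemiRingType) (m n : nat) (x : 'I_n -> R) (i : 'I_n) :
  \prod_(k < m.-1) x (tnth (diag_idx m i) k) = x i ^+ m.-1.
Proof.
by under eq_bigr do rewrite tnth_nseq; rewrite prodr_const card_ord.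
Qed.

Lemma B_tensor_B0 (R : realType) (m n : nat) (A : tensor R m n) :
  is_B_tensor A -> is_B0_tensor A.
Proof.
move=> AB i; have [sum_gt0 entry_lt] := AB i.
by split=> [|t t_offdiag]; [exact: ltW | exact/ltW/entry_lt].
Qed.

Lemma P_tensor_P0 (R : realType) (m n : nat) (A : tensor R m n) :
  is_P_tensor A -> is_P0_tensor A.
Proof.
move=> AP x x_nz; have [i xAx_gt0] := AP x x_nz.
exists i; split; last exact: ltW.
by apply: contraTneq xAx_gt0 => ->; rewrite mul0r ltxx.
Qed.

Lemma not_P0_tensor (R : realType) (m n : nat) (A : tensor R m n) (x : 'I_n -> R) :
  nonzero_vec x -> (forall i, x i * tapply A x i < 0) -> ~ is_P0_tensor A.
Proof.
move=> x_nz xAx_lt0 AP0; have [i [_ xAx_ge0]] := AP0 x x_nz.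
by have := xAx_lt0 i; rewrite ltNge xAx_ge0.
Qed.

Section SpikedTensor.
Variables (R : realType) (m n : nat).
Variables (c w b : 'I_n -> R) (spike : 'I_n -> (m.-1).-tuple 'I_n).

Definition spiked_tensor : tensor R m n := fun i t =>
  c i + w i * (t == diag_idx m i)%:R - b i * (t == spike i)%:R.

Lemma row_sum_spiked i :
  row_sum spiked_tensor i = c i * (n ^ m.-1)%:R + w i - b i.
Proof.
rewrite /row_sum /spiked_tensor !big_split /= sumrN sumr_const card_tuple card_ord.
by rewrite !sumr_mul_indicator mulr_natr.
Qed.

Lemma tapply_spiked (x : 'I_n -> R) i :
  tapply spiked_tensor x i = c i * (\sum_j x j) ^+ m.-1 + w i * x i ^+ m.-1
                             - b i * \prod_(k < m.-1) x (tnth (spike i) k).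
Proof.
rewrite /tapply /spiked_tensor -sum_prod_tnth -prod_diag_idx.
under eq_bigr => t _.
  rewrite mulrBl mulrDl (mulrAC (w i)) (mulrAC (b i)) -(mulrA (w i)) -(mulrA (b i)).
  over.
by rewrite !big_split /= sumrN -!mulr_sumr !sumr_mul_indicator.
Qed.

Hypotheses (c_gt0 : forall i, 0 < c i) (b_ge0 : forall i, 0 <= b i)
           (b_lt_w : forall i, b i < w i).

(* Off the diagonal an entry is at most c_i, while the row mean is
   c_i + (w_i - b_i) / n^(m-1). *)
Lemma spiked_B_tensor : is_B_tensor spiked_tensor.
Proof.
move=> i; have N_gt0 : (0 : R) < (n ^ m.-1)%:R.
  by rewrite ltr0n expn_gt0; case: n i => [[]|].
have w_sub_b_gt0 : 0 < w i - b i by rewrite subr_gt0.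
split=> [|t /negbTE t_offdiag].
  by rewrite row_sum_spiked -addrA addr_gt0 // mulr_gt0.
apply: (@le_lt_trans _ _ (c i)).
  rewrite /spiked_tensor t_offdiag mulr0 addr0 lerBlDr lerDl.
  by rewrite mulr_ge0 ?ler0n.
by rewrite row_sum_spiked ltr_pdivlMr // -addrA ltrDl.
Qed.

End SpikedTensor.

Section Counterexample.
Variables (R : realType) (p : nat).
Hypotheses (p_odd : odd p) (p_ge3 : (3 <= p)%N).

Definition cex_const (i : 'I_4) : R := if i == ord0 then 2 ^+ p.+1 else 1.
Definition cex_diag (i : 'I_4) : R := if i == ord0 then 1 else 2.
Definition cex_spike_coef (i : 'I_4) : R := if i == ord0 then 0 else 1.
Definition cex_spike (i : 'I_4) : p.-tuple 'I_4 :=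
  [tuple if val k == 0%N then i else ord0 | k < p].

Definition cex_tensor : tensor R p.+1 4 :=
  @spiked_tensor R p.+1 4 cex_const cex_diag cex_spike_coef cex_spike.

Definition cex_vec (j : 'I_4) : R := if j == ord0 then 2 else -1.

Lemma cex_tensor_B : is_B_tensor cex_tensor.
Proof.
apply: spiked_B_tensor => i; rewrite /cex_const /cex_diag /cex_spike_coef.
- by case: ifP; rewrite ?exprn_gt0.
- by case: ifP; rewrite ?lexx ?ler01.
- by case: ifP; rewrite ?ltr01 ?ltr1n.
Qed.

Lemma sum_cex_vec : \sum_j cex_vec j = -1.
Proof. by rewrite !big_ord_recl big_ord0 /cex_vec /=; ring. Qed.

Lemma prod_cex_spike (x : 'I_4 -> R) i :
  \prod_(k < p) x (tnth (cex_spike i) k) = x i * x ord0 ^+ p.-1.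
Proof.
under eq_bigr do rewrite tnth_mktuple.
case: p p_ge3 => // q _; rewrite big_ord_recl /=.
by rewrite prodr_const card_ord.
Qed.

Lemma cex_vec_tapply_neg i : cex_vec i * tapply cex_tensor cex_vec i < 0.
Proof.
have odd_pow : (-1 : R) ^+ p = -1 by rewrite -signr_odd p_odd.
have four_le : (4 : R) <= 2 ^+ p.-1.
  have -> : (4 : R) = 2 ^+ 2 by rewrite expr2; lra.
  by rewrite ler_eXn2l ?ltr1n // -subn1 ltn_subRL.
rewrite tapply_spiked sum_cex_vec prod_cex_spike odd_pow /cex_vec.
rewrite /cex_const /cex_diag /cex_spike_coef /=.
case: ifP => _.
  have : (0 : R) < 2 ^+ p by rewrite exprn_gt0.
  by rewrite exprS; nra.
by rewrite odd_pow; lra.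
Qed.

End Counterexample.

Theorem proposition3p1 (R : realType) (m : nat) :
  ~~ odd m -> (4 <= m)%N ->
  exists n : nat, (0 < n)%N /\
    (exists A : tensor R m n, is_B_tensor A /\ ~ is_P_tensor A) /\
    (exists A : tensor R m n, is_B0_tensor A /\ ~ is_P0_tensor A).
Proof.
case: m => // p m_even m_ge4.
have p_odd : odd p by move: m_even; rewrite /= negbK.
have p_ge3 : (3 <= p)%N by [].
have cex_not_P0 : ~ is_P0_tensor (@cex_tensor R p).
  apply: not_P0_tensor (cex_vec_tapply_neg R p_odd p_ge3).
  by exists ord0; rewrite /cex_vec eqxx pnatr_eq0.
exists 4%N; split=> //; split; exists (@cex_tensor R p); split.
- exact: cex_tensor_B.
- by move/P_tensor_P0.
- exact/B_tensor_B0/cex_tensor_B.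
- exact: cex_not_P0.
Qed.
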